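(* Consider the following single-link transmission system. Time is slotted, $t=0,1,2,\dots$. A fixed amount $\delta>0$ of mutual information is called a data unit. A sequence of packets $f=0,1,2,\dots$ is transmitted one at a time; packet $f$ has length $L[f]$, a positive integer number of data units, with $\{L[f]\}$ i.i.d. taking values in a finite set $\mathcal{L}$, and $L_{\max}=\max_{L\in\mathcal{L}}L$. The channel gain $\alpha(t)>0$ is i.i.d. over slots taking values in a finite set $\mathcal{A}=\{\alpha_1,\dots,\alpha_{|\mathcal{A}|}\}$ with probabilities $\phi(\alpha_i)$. In each slot the source picks a power spectral density $P(t)\in\mathcal{P}=\{P_1,\dots,P_{|\mathcal{P}|}\}$ with $0<P_1<P_2<\cdots<P_{|\mathcal{P}|}$, before observing $\alpha(t)$; the receiver then accumulates $K(\alpha(t),P(t))$ data units, where $K:\mathcal{A}\times\mathcal{P}\to\{1,2,3,\dots\}$ is nondecreasing in each argument, and $K_{\min}=\min_{\alpha\in\mathcal{A}}K(\alpha,P_1)$. Frame $f$ starts at slot $t_f$ (with $t_0=0$) and ends at the first slot $t_{f+1}-1$ such that $\sum_{t=t_f}^{t_{f+1}-1}K(\alpha(t),P(t))\ge L[f]$; $T[f]=t_{f+1}-t_f$. Let $\beta>0$ with $P_1<\beta$, and let $V>0$. The proposed algorithm maintains $Q[0]=0$, $Q[f+1]=\max\{Q[f]+\sum_{t=t_f}^{t_{f+1}-1}(P(t)-\beta),0\}$, and defines $R_f(P)=V+Q[f](P-\beta)$ for $P\in\mathcal{P}$. At the start of frame $f$, having observed $Q[f]$ and $L[f]$, it chooses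 power allocations over the frame so as to minimize $\mathbb{E}\big[\sum_{t=t_f}^{t_{f+1}-1}R_f(P(t))\,\big|\,Q[f],L[f]\big]$ subject to $\sum_{t=t_f}^{t_{f+1}-1}K(\alpha(t),P(t))\ge L[f]$; in particular, whenever $R_f(P_j)<0$ for some $P_j\in\mathcal{P}$, it uses $P(t)=P_1$ in every slot of frame $f$ (and otherwise uses a dynamic-programming solution of the minimization). Then for all $f\in\{1,2,3,\dots\}$, \[Q[f]\le \max\left\{\frac{V}{\beta-P_1}+\left\lceil\frac{L_{\max}}{K_{\min}}\right\rceil\,(P_{|\mathcal{P}|}-\beta),\;0\right\}.\]
   Context: $\lceil x\rceil$ is the smallest integer greater than or equal to $x$. The source observes $L[f]$ at the start of frame $f$, does not observe $\alpha(t)$ before choosing $P(t)$, knows the distribution $\phi$, and learns $\alpha(t)$ (hence the delivered mutual information) by feedback at the end of slot $t$. The source cannot start a new packet before the previous one is decoded. *)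

From HB Require Import structures.
From mathcomp Require Import all_boot all_order all_algebra.
From mathcomp Require Import archimedean reals.
Set Implicit Arguments. Unset Strict Implicit. Unset Printing Implicit Defensive.
Import Order.TTheory GRing.Theory Num.Theory.
Local Open Scope ring_scope.

Fixpoint Qq (R : realType) (beta : R) (P : nat -> R) (tf : nat -> nat) (f : nat)
  : R :=
  match f with
  | 0 => 0
  | f'.+1 => Num.max (Qq beta P tf f' + \sum_(tf f' <= t < tf f'.+1) (P t - beta)) 0
  end.

Definition Kmin (R : realType) (K : R -> R -> nat) (As : seq R) (P1 : R) : nat :=
  \big[minn/K (head 0 As) P1]_(a <- As) K a P1.

Definition Lmax (Ls : seq nat) : nat := \max_(l <- Ls) l.

(** Whenever [Q[f]] exceeds [V / (beta - P_1)], the weight [V + Q[f] (P_1 - beta)]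
    is negative, so the whole frame is sent at power [P_1 < beta] and the queue
    does not grow.  Otherwise the queue grows by at most [T[f] (P_max - beta)],
    and a frame needs at most [ceil (L_max / K_min)] slots because every slot
    delivers at least [K_min] data units. *)

From HB Require Import structures.
From mathcomp Require Import all_boot all_order all_algebra.
From mathcomp Require Import archimedean reals.
From mathcomp Require Import lra zify.
Set Implicit Arguments. Unset Strict Implicit. Unset Printing Implicit Defensive.
Import Order.TTheory GRing.Theory Num.Theory.
Local Open Scope ring_scope.

Lemma mem_sorted_head_last (d : Order.disp_t) (T : porderType d) (x0 x : T)
    (s : seq T) :
  sorted <%O s -> x \in s -> (head x0 s <= x)%O && (x <= last x0 s)%O.
Proof.
case: s => //= p s; elim: s p x => [|y s IH] p x /=.
  by move=> _; rewrite inE => /eqP ->; rewrite lexx.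
move=> /andP [lt_py path_y]; rewrite inE => /orP [/eqP ->|x_ys].
  by rewrite lexx (le_trans (ltW lt_py)) //; case/andP: (IH y y path_y (mem_head _ _)).
by case/andP: (IH y x path_y x_ys) => le_yx ->; rewrite (le_trans (ltW lt_py)).
Qed.

Lemma Lmax_ge (Ls : seq nat) (l : nat) : l \in Ls -> (l <= Lmax Ls)%N.
Proof. by move=> l_Ls; apply: (@leq_bigmax_seq _ Ls predT id l). Qed.

Lemma Kmin_le (R : realType) (K : R -> R -> nat) (As : seq R) (p a : R) :
  a \in As -> (Kmin K As p <= K a p)%N.
Proof.
rewrite /Kmin; move: (K (head 0 As) p) => k0.
elim: As => //= b s IH; rewrite inE big_cons => /orP [/eqP ->|a_s].
  exact: geq_minl.
exact: leq_trans (geq_minr _ _) (IH a_s).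
Qed.

Lemma Kmin_gt0 (R : realType) (K : R -> R -> nat) (As : seq R) (p : R) :
  As != [::] -> (forall a, a \in As -> (0 < K a p)%N) -> (0 < Kmin K As p)%N.
Proof.
move=> As_ne K_gt0; rewrite /Kmin big_seq.
apply: (big_ind (fun n => 0 < n)%N) => [|m n m_gt0 n_gt0|a /K_gt0 //].
  by apply: K_gt0; case: As As_ne => //= a s _; rewrite mem_head.
by rewrite leq_min m_gt0 n_gt0.
Qed.

(* The last slot of the window may deliver arbitrarily much; the [n.-1 - m]
   slots before it deliver at least [kmin] each but less than [lmax] in total. *)
Lemma window_length_le_ceil (R : archiRealFieldType) (k : nat -> nat)
    (m n kmin lmax : nat) :
  (m < n)%N -> (0 < kmin)%N -> (forall t, kmin <= k t)%N ->
  (\sum_(m <= t < n.-1) k t < lmax)%N ->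
  ((n - m)%:R : R) <= (Num.ceil (lmax%:R / kmin%:R : R))%:~R.
Proof.
move=> lt_mn kmin_gt0 kmin_le sum_lt.
have prefix_lt : ((n.-1 - m) * kmin < lmax)%N.
  apply: leq_ltn_trans sum_lt.
  by rewrite -sum_nat_const_nat; apply: leq_sum => t _.
have : ((n.-1 - m)%:Z)%:~R < (lmax%:R / kmin%:R : R).
  by rewrite ltr_pdivlMr ?ltr0n // -natrM ltr_nat.
rewrite -ceil_gt_int -lezD1 => le_ceil.
rewrite pmulrn ler_int (le_trans _ le_ceil) // -PoszD; lia.
Qed.

Lemma sum_drift_le (R : realFieldType) (m n : nat) (P : nat -> R)
    (pmax beta c : R) :
  (forall t, P t <= pmax) -> ((n - m)%:R : R) <= c ->
  \sum_(m <= t < n) (P t - beta) <= Num.max (c * (pmax - beta)) 0.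
Proof.
move=> P_le len_le.
have sum_le : \sum_(m <= t < n) (P t - beta) <= (n - m)%:R * (pmax - beta).
  rewrite mulr_natl -sumr_const_nat.
  by apply: ler_sum => t _; rewrite lerD2r.
have [le_pmax|lt_pmax] := leP beta pmax; rewrite le_max.
  by rewrite (le_trans sum_le) // ler_wpM2r // subr_ge0.
by rewrite orbC (le_trans sum_le) // mulr_ge0_le0 // subr_le0 ltW.
Qed.

Lemma weight_lt0 (R : realFieldType) (V q p beta : R) :
  p < beta -> V / (beta - p) < q -> V + q * (p - beta) < 0.
Proof. by move=> lt_pb; rewrite ltr_pdivrMr ?subr_gt0 // mulrBr; lra. Qed.

Lemma queue_step_le (R : realDomainType) (q s C D : R) :
  q <= Num.max (C + D) 0 -> (C < q -> s <= 0) -> s <= Num.max D 0 ->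
  Num.max (q + s) 0 <= Num.max (C + D) 0.
Proof.
move=> q_le s_le0 s_le; rewrite ge_max [0 <= _]le_max lexx orbT andbT.
have [/s_le0 s_le0'|le_qC] := ltP C q; first by apply: le_trans q_le; lra.
by move: q_le s_le; rewrite !le_max; case: leP; case: leP; lra.
Qed.

Theorem mainTheorem2 (R : realType)
    (As : seq R) (Ps : seq R) (Ls : seq nat) (K : R -> R -> nat)
    (beta V : R)
    (alpha : nat -> R) (L : nat -> nat) (P : nat -> R) (tf : nat -> nat) :
    (* the finite set A of channel gains: nonempty, positive *)
    As != [::] ->
    (forall a, a \in As -> 0 < a) ->
    (* the finite power set P = {P_1 < ... < P_|P|}, P_1 > 0 *)
    Ps != [::] ->
    sorted <%R Ps ->
    0 < head 0 Ps ->
    (* the finite set of packet lengths: positive integers *)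
    Ls != [::] ->
    (forall l, l \in Ls -> (0 < l)%N) ->
    (* K : A x P -> {1,2,...}, nondecreasing in each argument *)
    (forall a p, a \in As -> p \in Ps -> (0 < K a p)%N) ->
    (forall a a' p, a \in As -> a' \in As -> p \in Ps -> a <= a' ->
       (K a p <= K a' p)%N) ->
    (forall a p p', a \in As -> p \in Ps -> p' \in Ps -> p <= p' ->
       (K a p <= K a p')%N) ->
    (* parameters *)
    0 < beta -> head 0 Ps < beta -> 0 < V ->
    (* a realization of the system *)
    (forall t, alpha t \in As) ->
    (forall f, L f \in Ls) ->
    (forall t, P t \in Ps) ->
    (* frame structure: t_0 = 0, frame f ends at the first slot at which the
       accumulated data units reach L[f] *)
    tf 0 = 0%N ->
    (forall f, (tf f < tf f.+1)%N) ->
    (forall f, (L f <= \sum_(tf f <= t < tf f.+1) K (alpha t) (P t))%N) ->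
    (forall f, (\sum_(tf f <= t < (tf f.+1).-1) K (alpha t) (P t) < L f)%N) ->
    (* the algorithm's rule: if R_f(P_j) = V + Q[f](P_j - beta) < 0 for some
       P_j in P, then P(t) = P_1 in every slot of frame f *)
    (forall f, (exists2 p, p \in Ps & V + Qq beta P tf f * (p - beta) < 0) ->
       forall t, (tf f <= t < tf f.+1)%N -> P t = head 0 Ps) ->
    forall f, (0 < f)%N ->
      Qq beta P tf f <=
        Num.max (V / (beta - head 0 Ps)
                 + ((Num.ceil ((Lmax Ls)%:R / (Kmin K As (head 0 Ps))%:R : R))%:~R : R)
                   * (last 0 Ps - beta)) 0.
Proof.
move=> As_ne _ Ps_ne Ps_sorted _ _ _ K_gt0 _ K_monoP _ lt_P1b _
  alpha_As L_Ls P_Ps _ tf_lt _ frame_short P1_rule f _.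
set P1 := head 0 Ps; set N := Num.ceil _.
have P_bounds t : (P1 <= P t) && (P t <= last 0 Ps).
  by have := mem_sorted_head_last 0 Ps_sorted (P_Ps t).
have P1_Ps : P1 \in Ps by rewrite /P1 -nth0 mem_nth // lt0n size_eq0.
have Kmin_le_K t : (Kmin K As P1 <= K (alpha t) (P t))%N.
  apply: leq_trans (Kmin_le K P1 (alpha_As t)) _.
  by apply: K_monoP => //; case/andP: (P_bounds t).
have frame_length g : ((tf g.+1 - tf g)%:R : R) <= N%:~R.
  apply: (window_length_le_ceil R (tf_lt g)) _ Kmin_le_K _.
    by apply: Kmin_gt0 => // a a_As; apply: K_gt0.
  exact: leq_trans (frame_short g) (Lmax_ge (L_Ls g)).
elim: f => [|g IH] /=; first by rewrite le_max lexx orbT.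
apply: queue_step_le IH _ _; last first.
  by apply: sum_drift_le (frame_length g) => t; case/andP: (P_bounds t).
move=> /(weight_lt0 lt_P1b) weight_P1_lt0; rewrite big_nat.
apply: sumr_le0 => t t_frame; rewrite (P1_rule g _ t t_frame) ?subr_le0 ?ltW //.
by exists P1.
Qed.
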